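(* Let $p$ be a prime, $a\ge 1$ an integer, $\tilde\chi$ a Dirichlet character modulo $p^a$, and $b:=\lceil a/3\rceil$. (i) If $p$ is odd, there exists an integer $L$, depending only on $\tilde\chi,p,a,b$ (and not on $x$), such that for all $x\in\mathbb{Z}$, $$\tilde\chi(1+p^b x)=\exp\!\left(\frac{4\pi i\,L\,x}{p^{a-b}}-\frac{2\pi i\,L\,x^2}{p^{a-2b}}\right).$$ (ii) If $p=2$ and $a>3$, there exists an integer $L_1$, depending only on $\tilde\chi$ and $b$ (and not on $x$), such that for all $x\in\mathbb{Z}$, $$\tilde\chi(1+2^b x)=\exp\!\left(\frac{2\pi i\,L_1\,x}{2^{a-b}}-\frac{\pi i\,L_1\,x^2}{2^{a-2b}}\right).$$ (iii) If $p=2$ and $a\le 3$, there exist integers $L_2,L_3$ with $-1\le L_2,L_3\le 2$ such that $\tilde\chi(1+2^b x)=(-1)^{(L_2x+L_3x^2)/2}$ for all $x\in\mathbb{Z}$ (here $L_2x+L_3x^2$ is always even). *)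

From Stdlib Require Import Reals ZArith Znumtheory.
From Coquelicot Require Import Coquelicot.
Open Scope R_scope.

Definition cis (theta : R) : C := (cos theta, sin theta).

Definition dirichlet_character (q : Z) (chi : Z -> C) : Prop :=
  chi 1%Z = RtoC 1 /\
  (forall m n : Z, chi (m * n)%Z = Cmult (chi m) (chi n)) /\
  (forall n : Z, chi (n + q)%Z = chi n) /\
  (forall n : Z, chi n = RtoC 0 <-> Z.gcd n q <> 1%Z).

Definition ceil3 (a : Z) : Z := ((a + 2) / 3)%Z.

(* Since 3b >= a, every product of three multiples of p^b vanishes modulo p^a.
   Hence on the subgroup 1 + p^b Z of (Z/p^a)^x the truncated logarithm
   1 + p^b x |-> 2x - p^b x^2 (for p = 2: x - 2^(b-1) x^2) is a homomorphism
   onto Z/p^(a-b), and it is injective because its difference quotient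
   (2 - p^b (x + y), resp. 1 - 2^(b-1) (x + y)) is prime to p.  So the
   subgroup is cyclic, chi maps it to the p^(a-b)-th roots of unity, and
   chi(1 + p^b x) = cis(2 pi L log(x) / p^(a-b)) for some integer L.
   For p = 2 and a <= 3 the group (Z/8)^x is not cyclic; chi is then a sign
   determined by chi 3 and chi 5. *)

From Stdlib Require Import Reals ZArith Znumtheory FinFun Lia Lra.
From Coquelicot Require Import Coquelicot.
Open Scope R_scope.

Lemma cis_add (s t : R) : (cis s * cis t)%C = cis (s + t).
Proof. unfold Cmult, cis; simpl. rewrite cos_plus, sin_plus. f_equal; ring. Qed.

Lemma cis_int_turn (k : Z) : cis (2 * PI * IZR k) = 1.
Proof.
  unfold cis, RtoC.
  assert (Hsin : sin (PI * IZR k) = 0) by (apply sin_eq_0_1; exists k; ring).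
  replace (2 * PI * IZR k) with (2 * (PI * IZR k)) by ring.
  rewrite cos_2a_sin, sin_2a, Hsin. f_equal; ring.
Qed.

Lemma cis_add_int_turn (t : R) (k : Z) : cis (t + 2 * PI * IZR k) = cis t.
Proof.
  rewrite <- cis_add, cis_int_turn.
  unfold Cmult, cis, RtoC; simpl; f_equal; ring.
Qed.

Lemma Cpow_cis (t : R) (n : nat) : (cis t ^ n)%C = cis (INR n * t).
Proof.
  induction n as [|n IH]; simpl Cpow.
  - unfold cis, RtoC. simpl. rewrite Rmult_0_l, cos_0, sin_0. reflexivity.
  - rewrite IH, cis_add, S_INR. f_equal; ring.
Qed.

Lemma cis_eq_1 (t : R) : cis t = 1 -> exists k : Z, t = 2 * PI * IZR k.
Proof.
  unfold cis, RtoC. intros H. injection H as Hcos _.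
  assert (Hsin : sin (t / 2) = 0).
  { assert (E : cos t = 1 - 2 * sin (t / 2) * sin (t / 2)).
    { rewrite <- cos_2a_sin. f_equal. field. }
    nra. }
  destruct (sin_eq_0_0 _ Hsin) as [k Hk].
  exists k. lra.
Qed.

Lemma Cmod_eq_1_cis (w : C) : Cmod w = 1 -> exists t : R, w = cis t.
Proof.
  destruct w as [x y]. unfold Cmod; cbn [fst snd]. intros Hm.
  assert (Hxy : x ^ 2 + y ^ 2 = 1).
  { rewrite <- (sqrt_sqrt (x ^ 2 + y ^ 2)) by nra. rewrite Hm; ring. }
  assert (Hsin : sin (acos x) = Rabs y).
  { rewrite sin_acos by nra. rewrite <- sqrt_Rsqr_abs. f_equal. unfold Rsqr; nra. }
  destruct (Rle_dec 0 y) as [Hy | Hy].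
  - exists (acos x). unfold cis.
    rewrite cos_acos, Hsin, Rabs_right by nra. reflexivity.
  - exists (- acos x). unfold cis.
    rewrite cos_neg, sin_neg, cos_acos, Hsin, Rabs_left by nra. f_equal; ring.
Qed.

Lemma Cmod_root_of_unity (w : C) (N : nat) :
  (0 < N)%nat -> (w ^ N)%C = 1 -> Cmod w = 1.
Proof.
  intros HN Hw.
  assert (H1 : Cmod w ^ N = 1) by (rewrite <- Cmod_pow, Hw; apply Cmod_1).
  pose proof (Cmod_ge_0 w) as H0.
  destruct (Rtotal_order (Cmod w) 1) as [Hl | [He | Hg]]; auto; exfalso.
  - assert (Cmod w ^ N < 1) by (apply pow_lt_1_compat; [lra | lia]). lra.
  - assert (1 < Cmod w ^ N) by (apply Rlt_pow_R1; [lra | lia]). lra.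
Qed.

Lemma root_of_unity_cis (w : C) (N : nat) :
  (0 < N)%nat -> (w ^ N)%C = 1 -> exists k : Z, w = cis (2 * PI * IZR k / INR N).
Proof.
  intros HN Hw.
  destruct (Cmod_eq_1_cis w (Cmod_root_of_unity w N HN Hw)) as [t ->].
  rewrite Cpow_cis in Hw.
  destruct (cis_eq_1 _ Hw) as [k Hk].
  exists k. f_equal.
  assert (0 < INR N) by (apply lt_0_INR; lia).
  rewrite <- Hk. field. lra.
Qed.

Open Scope Z_scope.

Lemma periodic_mul {A : Type} (f : Z -> A) (Q : Z) :
  (forall n, f (n + Q) = f n) -> forall n k, f (n + k * Q) = f n.
Proof.
  intros Hper.
  assert (Hnat : forall (j : nat) n, f (n + Z.of_nat j * Q) = f n).
  { induction j as [|j IH]; intro n.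
    - now rewrite Z.add_0_r.
    - rewrite <- (IH n), <- (Hper (n + Z.of_nat j * Q)). f_equal. lia. }
  intros n k. destruct (Z_le_gt_dec 0 k).
  - rewrite <- (Z2Nat.id k) by lia. apply Hnat.
  - rewrite <- (Hnat (Z.to_nat (- k)) (n + k * Q)). f_equal.
    rewrite Z2Nat.id by lia. ring.
Qed.

Definition shifted_mul (P x y : Z) : Z := x + y + P * x * y.

Fixpoint shifted_pow (P x : Z) (m : nat) : Z :=
  match m with
  | O => 0
  | S m => shifted_mul P (shifted_pow P x m) x
  end.

Lemma mul_one_plus (P x y : Z) : (1 + P * x) * (1 + P * y) = 1 + P * shifted_mul P x y.
Proof. unfold shifted_mul. ring. Qed.

Lemma surj_mod_of_inj_mod (N : Z) (G : Z -> Z) :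
  0 < N -> (forall x y, (N | G x - G y) -> (N | x - y)) ->
  forall y, exists x, (N | G x - y).
Proof.
  intros HN Hinj y.
  set (f := fun k : nat => Z.to_nat (G (Z.of_nat k) mod N)).
  assert (Hbound : forall z, 0 <= z mod N < N) by (intro; apply Z.mod_pos_bound; lia).
  assert (Hf : bFun (Z.to_nat N) f)
    by (intros k _; unfold f; specialize (Hbound (G (Z.of_nat k))); lia).
  assert (Hfinj : bInjective (Z.to_nat N) f).
  { intros k l Hk Hl Hkl. unfold f in Hkl.
    apply Z2Nat.inj in Hkl; try apply Hbound.
    assert (Hd : (N | Z.of_nat k - Z.of_nat l)).
    { apply Hinj, Z.mod_divide; [lia |].
      now rewrite Zminus_mod, Hkl, Z.sub_diag. }
    destruct Hd as [t Ht].
    assert (t = 0) by (destruct (Z.lt_trichotomy t 0) as [Ht0 | [Ht0 | Ht0]]; nia).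
    lia. }
  destruct (proj1 (bInjective_bSurjective Hf) Hfinj (Z.to_nat (y mod N))) as [k [_ Hk]].
  { specialize (Hbound y). lia. }
  exists (Z.of_nat k). apply Z.mod_divide; [lia |].
  unfold f in Hk. apply Z2Nat.inj in Hk; try apply Hbound.
  now rewrite Zminus_mod, Hk, Z.sub_diag.
Qed.

Section CharacterOnOnePlusPZ.

Variables (P N : Z) (G : Z -> Z) (chi : Z -> C).
Hypotheses
  (N_pos : 0 < N)
  (chi_one : chi 1 = RtoC 1)
  (chiM : forall m n, chi (m * n) = Cmult (chi m) (chi n))
  (chi_periodic : forall n, chi (n + P * N) = chi n)
  (G_morph : forall x y, (N | G (shifted_mul P x y) - (G x + G y)))
  (G_inj : forall x y, (N | G x - G y) -> (N | x - y)).

Lemma chi_one_plus_congr x y : (N | x - y) -> chi (1 + P * x) = chi (1 + P * y).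
Proof.
  intros [t Ht]. rewrite <- (periodic_mul chi (P * N) chi_periodic (1 + P * y) t).
  f_equal. replace x with (y + t * N) by lia. ring.
Qed.

Lemma chi_shifted_pow x m : chi (1 + P * shifted_pow P x m) = (chi (1 + P * x) ^ m)%C.
Proof.
  induction m as [|m IH]; simpl shifted_pow; simpl Cpow.
  - now rewrite Z.mul_0_r.
  - now rewrite <- mul_one_plus, chiM, IH, Cmult_comm.
Qed.

Lemma G_zero : (N | G 0).
Proof.
  assert (H := G_morph 0 0). unfold shifted_mul in H.
  replace (0 + 0 + P * 0 * 0) with 0 in H by ring.
  replace (G 0) with (- (G 0 - (G 0 + G 0))) by ring.
  now apply Z.divide_opp_r.
Qed.

Lemma G_shifted_pow x m : (N | G (shifted_pow P x m) - Z.of_nat m * G x).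
Proof.
  induction m as [|m IH]; simpl shifted_pow.
  - rewrite Z.mul_0_l, Z.sub_0_r. exact G_zero.
  - replace (G (shifted_mul P (shifted_pow P x m) x) - Z.of_nat (S m) * G x) with
      ((G (shifted_mul P (shifted_pow P x m) x) - (G (shifted_pow P x m) + G x))
       + (G (shifted_pow P x m) - Z.of_nat m * G x)) by lia.
    now apply Z.divide_add_r.
Qed.

Lemma chi_one_plus_Cpow x1 x m :
  (N | G x1 - 1) -> (N | G x - Z.of_nat m) -> chi (1 + P * x) = (chi (1 + P * x1) ^ m)%C.
Proof.
  intros [s Hs] [t Ht]. rewrite <- chi_shifted_pow.
  apply chi_one_plus_congr, G_inj.
  destruct (G_shifted_pow x1 m) as [u Hu].
  exists (t - u - Z.of_nat m * s). nia.
Qed.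

Lemma chi_one_plus_cis :
  exists k : Z, forall x, chi (1 + P * x) = cis (2 * PI * IZR k * IZR (G x) / IZR N).
Proof.
  destruct (surj_mod_of_inj_mod N G N_pos G_inj 1) as [x1 Hx1].
  assert (Hroot : (chi (1 + P * x1) ^ Z.to_nat N)%C = RtoC 1).
  { rewrite <- (chi_one_plus_Cpow x1 0); [now rewrite Z.mul_0_r | exact Hx1 |].
    destruct G_zero as [t Ht]. exists (t - 1). rewrite Z2Nat.id; lia. }
  destruct (root_of_unity_cis _ (Z.to_nat N) ltac:(lia) Hroot) as [k Hk].
  exists k. intro x.
  set (m := Z.to_nat (G x mod N)).
  assert (Hm : Z.of_nat m = G x mod N) by (apply Z2Nat.id, Z.mod_pos_bound, N_pos).
  rewrite (chi_one_plus_Cpow x1 x m Hx1).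
  2: { exists (G x / N). rewrite Hm, Z.mod_eq by lia. ring. }
  rewrite Hk, Cpow_cis, INR_IZR_INZ, Hm, INR_IZR_INZ, Z2Nat.id by lia.
  rewrite <- (cis_add_int_turn _ (k * (G x / N))). f_equal.
  replace (IZR (G x)) with (IZR (N * (G x / N) + G x mod N))
    by (f_equal; symmetry; apply Z.div_mod; lia).
  rewrite plus_IZR, !mult_IZR. field. apply not_0_IZR. lia.
Qed.
End CharacterOnOnePlusPZ.

(* With [u P = 2 S] this is [u/P] times the Taylor polynomial of degree 2 of
   [log (1 + P x)]; the divisibility hypotheses kill the cubic error terms. *)
Definition quad_log (u S x : Z) : Z := u * x - S * x ^ 2.

Section QuadraticLogarithm.

Variables (P N u S : Z).
Hypotheses
  (uP_eq : u * P = 2 * S)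
  (N_dvd_2SP : (N | 2 * S * P))
  (N_dvd_SPP : (N | S * P * P))
  (N_coprime : forall t, rel_prime N (u - S * t)).

Lemma quad_log_morph x y :
  (N | quad_log u S (shifted_mul P x y) - (quad_log u S x + quad_log u S y)).
Proof.
  destruct N_dvd_2SP as [c Hc], N_dvd_SPP as [d Hd].
  exists (- c * x * y * (x + y) - d * x ^ 2 * y ^ 2).
  transitivity ((u * P - 2 * S) * x * y - (2 * S * P) * x * y * (x + y)
                - (S * P * P) * x ^ 2 * y ^ 2).
  - unfold quad_log, shifted_mul. ring.
  - rewrite uP_eq, Hc, Hd. ring.
Qed.

Lemma quad_log_inj x y : (N | quad_log u S x - quad_log u S y) -> (N | x - y).
Proof.
  intros Hd. apply (Gauss N (u - S * (x + y)) (x - y)); [| apply N_coprime].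
  replace ((u - S * (x + y)) * (x - y)) with (quad_log u S x - quad_log u S y)
    by (unfold quad_log; ring).
  exact Hd.
Qed.

End QuadraticLogarithm.

Lemma rel_prime_prime_pow_sub (q n u S t : Z) :
  prime q -> 0 <= n -> (q | S) -> ~ (q | u) -> rel_prime (q ^ n) (u - S * t).
Proof.
  intros Hq Hn HS Hu.
  apply rel_prime_sym, Zpow_facts.rel_prime_Zpower_r; [exact Hn |].
  apply rel_prime_sym, prime_rel_prime; [exact Hq |].
  intros Hd. apply Hu.
  replace u with ((u - S * t) + S * t) by ring.
  apply Z.divide_add_r; [exact Hd | now apply Z.divide_mul_l].
Qed.

Lemma Zpow_divide (p i j : Z) : 0 <= i <= j -> (p ^ i | p ^ j).
Proof. intros H. exists (p ^ (j - i)). rewrite <- Z.pow_add_r by lia. f_equal; lia. Qed.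

Lemma IZR_Zpow (p k : Z) : 0 <= k -> IZR (p ^ k) = powerRZ (IZR p) k.
Proof. intros Hk. destruct k; [reflexivity | apply Zpower_pos_powerRZ | lia]. Qed.

Lemma ceil3_bounds (a : Z) : 1 <= a -> 1 <= ceil3 a /\ 3 * ceil3 a - 2 <= a <= 3 * ceil3 a.
Proof.
  unfold ceil3. intros Ha.
  pose proof (Z.div_mod (a + 2) 3 ltac:(lia)). pose proof (Z.mod_pos_bound (a + 2) 3 ltac:(lia)).
  lia.
Qed.

Lemma character_odd_prime_power (p a : Z) (chi : Z -> C) :
  prime p -> p <> 2 -> 1 <= a -> dirichlet_character (p ^ a) chi ->
  let b := ceil3 a in
  exists L : Z, forall x : Z,
    chi (1 + p ^ b * x) =
    cis (4 * PI * IZR L * IZR x / powerRZ (IZR p) (a - b)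
         - 2 * PI * IZR L * IZR x ^ 2 / powerRZ (IZR p) (a - 2 * b)).
Proof.
  intros Hp Hp2 Ha [chi_one [chiM [chi_per _]]] b.
  destruct (ceil3_bounds a Ha) as [Hb1 Hb]. fold b in Hb1, Hb.
  pose proof (prime_ge_2 p Hp) as Hp_ge2.
  assert (HN : (p ^ (a - b) | p ^ b * p ^ b))
    by (rewrite <- Z.pow_add_r by lia; apply Zpow_divide; lia).
  destruct (chi_one_plus_cis (p ^ b) (p ^ (a - b)) (quad_log 2 (p ^ b)) chi)
    as [L HL]; auto.
  - apply Z.pow_pos_nonneg; lia.
  - intro n. rewrite <- Z.pow_add_r, Zplus_minus by lia. apply chi_per.
  - intros x y. apply quad_log_morph; [ring | ..].
    + apply (Z.divide_trans _ _ _ HN). exists 2. ring.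
    + apply (Z.divide_trans _ _ _ HN). exists (p ^ b). ring.
  - intros x y. apply quad_log_inj with (S := p ^ b) (u := 2).
    intro t. apply rel_prime_prime_pow_sub;
      [exact Hp | lia | apply Zpow_facts.Zpower_divide; lia |].
    intros H2. apply Z.divide_pos_le in H2; lia.
  - exists L. intro x. rewrite HL. f_equal. unfold quad_log.
    assert (Hp0 : IZR p <> 0%R) by (apply not_0_IZR; lia).
    rewrite minus_IZR, !mult_IZR, !IZR_Zpow by lia.
    change (powerRZ (IZR x) 2) with (IZR x ^ 2)%R.
    replace (a - b) with ((a - 2 * b) + b) by ring.
    rewrite powerRZ_add by exact Hp0.
    pose proof (powerRZ_NOR _ (a - 2 * b) Hp0). pose proof (powerRZ_NOR _ b Hp0).
    field. auto.
Qed.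

Lemma character_two_power (a : Z) (chi : Z -> C) :
  3 < a -> dirichlet_character (2 ^ a) chi ->
  let b := ceil3 a in
  exists L : Z, forall x : Z,
    chi (1 + 2 ^ b * x) =
    cis (2 * PI * IZR L * IZR x / powerRZ 2 (a - b)
         - PI * IZR L * IZR x ^ 2 / powerRZ 2 (a - 2 * b)).
Proof.
  intros Ha [chi_one [chiM [chi_per _]]] b.
  destruct (ceil3_bounds a ltac:(lia)) as [Hb1 Hb]. fold b in Hb1, Hb.
  assert (HP : 2 ^ b = 2 * 2 ^ (b - 1))
    by (rewrite <- Z.pow_succ_r by lia; f_equal; lia).
  assert (HN : (2 ^ (a - b) | 2 ^ b * 2 ^ b))
    by (rewrite <- Z.pow_add_r by lia; apply Zpow_divide; lia).
  destruct (chi_one_plus_cis (2 ^ b) (2 ^ (a - b)) (quad_log 1 (2 ^ (b - 1))) chi)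
    as [L HL]; auto.
  - apply Z.pow_pos_nonneg; lia.
  - intro n. rewrite <- Z.pow_add_r, Zplus_minus by lia. apply chi_per.
  - intros x y. apply quad_log_morph; [lia | ..].
    + rewrite <- HP. exact HN.
    + apply (Z.divide_trans _ _ _ HN). exists (2 ^ (b - 1)). ring.
  - intros x y. apply quad_log_inj with (S := 2 ^ (b - 1)) (u := 1).
    intro t. apply rel_prime_prime_pow_sub;
      [exact prime_2 | lia | apply Zpow_facts.Zpower_divide; lia |].
    intros H2. apply Z.divide_pos_le in H2; lia.
  - exists L. intro x. rewrite HL. f_equal. unfold quad_log.
    assert (H20 : 2%R <> 0%R) by lra.
    rewrite minus_IZR, !mult_IZR, !IZR_Zpow by lia.
    change (powerRZ (IZR x) 2) with (IZR x ^ 2)%R.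
    replace (a - b) with ((a - 2 * b) + (b - 1) + 1) by ring.
    rewrite !powerRZ_add by exact H20.
    pose proof (powerRZ_NOR _ (a - 2 * b) H20). pose proof (powerRZ_NOR _ (b - 1) H20).
    simpl (powerRZ 2 1). field. auto.
Qed.

Lemma sign_add (m n : Z) : powerRZ (-1) (m + n) = (powerRZ (-1) m * powerRZ (-1) n)%R.
Proof. apply powerRZ_add. lra. Qed.

Lemma sign_add_double (n t : Z) : powerRZ (-1) (n + 2 * t) = powerRZ (-1) n.
Proof.
  replace (2 * t) with (t + t) by ring.
  rewrite !sign_add, <- powerRZ_mult.
  replace (-1 * -1)%R with 1%R by ring. rewrite powerRZ_R1. ring.
Qed.

Lemma Cmult_self_eq_1 (z : C) :
  (z * z)%C = RtoC 1 -> exists e : Z, 0 <= e <= 1 /\ z = RtoC (powerRZ (-1) e).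
Proof.
  destruct z as [u v]. unfold Cmult, RtoC; cbn [fst snd]. intros H. injection H as Hre Him.
  assert (Hv : v = 0%R) by nra. subst v.
  assert (Hu : u = 1%R \/ u = (-1)%R) by nra.
  destruct Hu as [-> | ->]; [exists 0 | exists 1]; (split; [lia |]);
    unfold RtoC; simpl; f_equal; ring.
Qed.

Lemma sign_quadratic_of_residues (chi : Z -> C) (L2 L3 : Z) :
  (forall n k, chi (n + k * 8) = chi n) ->
  (forall r, 0 <= r < 4 -> exists K,
     L2 * r + L3 * r ^ 2 = 2 * K /\ chi (1 + 2 * r) = RtoC (powerRZ (-1) K)) ->
  forall x, Z.Even (L2 * x + L3 * x ^ 2) /\
    chi (1 + 2 * x) = RtoC (powerRZ (-1) ((L2 * x + L3 * x ^ 2) / 2)).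
Proof.
  intros chi8 Hres x.
  destruct (Hres (x mod 4)) as [K [HK Hchi]]; [apply Z.mod_pos_bound; lia |].
  set (q := x / 4). set (r := x mod 4) in HK, Hchi.
  assert (Hx : x = r + 4 * q) by (unfold q, r; pose proof (Z.div_mod x 4); lia).
  set (t := L2 * q + L3 * (4 * q * q + 2 * q * r)).
  assert (Hexp : L2 * x + L3 * x ^ 2 = 2 * (K + 2 * t)).
  { transitivity (L2 * r + L3 * r ^ 2 + 4 * t); [rewrite Hx; unfold t; ring |].
    rewrite HK. ring. }
  split; [now exists (K + 2 * t) |].
  rewrite Hexp, (Z.mul_comm 2 (K + 2 * t)), Z.div_mul, sign_add_double, <- Hchi by lia.
  rewrite Hx, <- (chi8 (1 + 2 * r) q). f_equal. ring.
Qed.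

Lemma character_small_two_power (a : Z) (chi : Z -> C) :
  1 <= a <= 3 -> dirichlet_character (2 ^ a) chi ->
  exists L2 L3 : Z, -1 <= L2 <= 2 /\ -1 <= L3 <= 2 /\
    forall x : Z, Z.Even (L2 * x + L3 * x ^ 2) /\
      chi (1 + 2 ^ ceil3 a * x) = RtoC (powerRZ (-1) ((L2 * x + L3 * x ^ 2) / 2)).
Proof.
  intros Ha [chi_one [chiM [chi_per _]]].
  replace (ceil3 a) with 1 by (pose proof (ceil3_bounds a); lia).
  assert (chi8 : forall n k, chi (n + k * 8) = chi n).
  { intros n k. replace (k * 8) with (k * 2 ^ (3 - a) * 2 ^ a)
      by (rewrite <- Z.mul_assoc, <- Z.pow_add_r, Z.sub_add by lia; reflexivity).
    now apply periodic_mul. }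
  assert (chi_sq : forall n k, n * n = 1 + k * 8 -> (chi n * chi n)%C = RtoC 1).
  { intros n k Hn. now rewrite <- chiM, Hn, chi8. }
  destruct (Cmult_self_eq_1 (chi 3) (chi_sq 3 1 eq_refl)) as [e3 [He3 chi3]].
  destruct (Cmult_self_eq_1 (chi 5) (chi_sq 5 3 eq_refl)) as [e5 [He5 chi5]].
  assert (chi7 : chi 7 = RtoC (powerRZ (-1) (e3 + e5))).
  { rewrite sign_add, RtoC_mult, <- chi3, <- chi5, <- chiM.
    now rewrite <- (chi8 7 1). }
  (* Then (L2 x + L3 x^2) / 2 = e3 x + e5 x (x - 1) / 2. *)
  exists (2 * e3 - e5), e5. split; [lia | split; [lia |]].
  apply sign_quadratic_of_residues; [exact chi8 |].
  intros r Hr.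
  assert (r = 0 \/ r = 1 \/ r = 2 \/ r = 3) as [-> | [-> | [-> | ->]]] by lia.
  - exists 0. split; [ring | exact chi_one].
  - exists e3. split; [ring | exact chi3].
  - exists (e5 + 2 * e3). split; [ring |]. now rewrite sign_add_double.
  - exists (e3 + e5 + 2 * (e3 + e5)). split; [ring |]. now rewrite sign_add_double.
Qed.

Theorem lemma2 (p a : Z) (chi : Z -> C) :
  prime p -> (1 <= a)%Z -> dirichlet_character (p ^ a)%Z chi ->
  let b := ceil3 a in
  (* (i) *)
  ((p <> 2%Z) ->
     exists L : Z, forall x : Z,
       chi (1 + p ^ b * x)%Z =
       cis (4 * PI * IZR L * IZR x / powerRZ (IZR p) (a - b)
            - 2 * PI * IZR L * IZR x ^ 2 / powerRZ (IZR p) (a - 2 * b))) /\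
  (* (ii) *)
  (p = 2%Z -> (a > 3)%Z ->
     exists L1 : Z, forall x : Z,
       chi (1 + 2 ^ b * x)%Z =
       cis (2 * PI * IZR L1 * IZR x / powerRZ 2 (a - b)
            - PI * IZR L1 * IZR x ^ 2 / powerRZ 2 (a - 2 * b))) /\
  (* (iii) *)
  (p = 2%Z -> (a <= 3)%Z ->
     exists L2 L3 : Z,
       (-1 <= L2 <= 2)%Z /\ (-1 <= L3 <= 2)%Z /\
       forall x : Z,
         Z.Even (L2 * x + L3 * x ^ 2)%Z /\
         chi (1 + 2 ^ b * x)%Z =
         RtoC (powerRZ (-1) ((L2 * x + L3 * x ^ 2) / 2)%Z)).
Proof.
  intros Hp Ha Hchi b. split; [| split].
  - intros Hp2. exact (character_odd_prime_power p a chi Hp Hp2 Ha Hchi).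
  - intros -> Ha3. exact (character_two_power a chi ltac:(lia) Hchi).
  - intros -> Ha3. exact (character_small_two_power a chi ltac:(lia) Hchi).
Qed.
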